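(* Let $\Omega\subset\mathbb{R}^n$ be bounded. If $\varphi\in\Phi_{\mathrm w}(\Omega)$ satisfies condition (A1), then it satisfies conditions (A0) and (A2).
   Context: A function $f:[0,\infty)\to[0,\infty]$ is $a$-almost increasing ($a\ge1$) if $f(s)\le a f(t)$ for all $s\le t$. A function $\varphi:\Omega\times[0,\infty)\to[0,\infty]$ is a weak $\Phi$-function, $\varphi\in\Phi_{\mathrm w}(\Omega)$, if for a.e. $x\in\Omega$: $x\mapsto\varphi(x,|f(x)|)$ is measurable for every measurable $f:\Omega\to\mathbb{R}$; $t\mapsto\varphi(x,t)$ is increasing (non-decreasing); $\varphi(x,0)=\lim_{t\to0^+}\varphi(x,t)=0$ and $\lim_{t\to\infty}\varphi(x,t)=\infty$; and $t\mapsto\varphi(x,t)/t$ is $a$-almost increasing on $(0,\infty)$ with $a\ge1$ independent of $x$. The left-inverse is $\varphi^{-1}(x,\tau):=\inf\{t\ge0:\varphi(x,t)\ge\tau\}$. Condition (A0): there exists $\beta\in(0,1]$ with $\beta\le\varphi^{-1}(x,1)\le1/\beta$ for a.e. $x\in\Omega$. Condition (A1): there exists $\beta\in(0,1]$ such that for every ball $B\subset\mathbb{R}^n$ and a.e. $x,y\in\Omega\cap B$, $\beta\varphi^{-1}(x,\tau)\le\varphi^{-1}(y,\tau)$ for all $\tau\in[1,1/|B|]$. Condition (A2): for every $\sigma>0$ there exist $\beta\in(0,1]$ and $h\in L^1(\Omega)\cap L^\infty(\Omega)$, $h\ge0$, such that for a.e. $x,y\in\Omega$, $\beta\varphi^{-1}(x,\tau)\le\varphi^{-1}(y,\tau+h(x)+h(y))$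 for all $\tau\in[0,\sigma]$. *)

From HB Require Import structures.
From mathcomp Require Import all_boot all_order all_algebra.
From mathcomp Require Import all_classical all_reals all_analysis.

Set Implicit Arguments.
Unset Strict Implicit.
Unset Printing Implicit Defensive.

Import Order.TTheory GRing.Theory Num.Theory.
Local Open Scope classical_set_scope.
Local Open Scope ring_scope.

Section GenOrlicz.
Variables (R : realType) (n : nat).
Notation Rn := 'rV[R]_n.

Definition sqnorm (x : Rn) : R := \sum_(i < n) (x ord0 i) ^+ 2.

Definition eball (c : Rn) (r : R) : set Rn :=
  [set y | sqnorm (y - c) < r ^+ 2].

Definition is_ball (B : set Rn) : Prop :=
  exists (c : Rn) (r : R), 0 < r /\ B = eball c r.

Definition bounded_Rn (A : set Rn) : Prop :=
  exists M : R, forall x, A x -> sqnorm x <= M.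

Definition box (a b : Rn) : set Rn :=
  [set x | forall i : 'I_n, a ord0 i <= x ord0 i < b ord0 i].

Definition boxvol (a b : Rn) : R :=
  \prod_(i < n) Num.max (b ord0 i - a ord0 i) 0.

Definition leb_outer (A : set Rn) : \bar R :=
  ereal_inf [set s : \bar R | exists a b : nat -> Rn,
      A `<=` \bigcup_k box (a k) (b k) /\
      s = (\sum_(k <oo) (boxvol (a k) (b k))%:E)%E].

Definition leb_measurable (A : set Rn) : Prop :=
  forall E : set Rn,
    leb_outer E = (leb_outer (E `&` A) + leb_outer (E `&` ~` A))%E.

Definition ae_in (Om : set Rn) (P : Rn -> Prop) : Prop :=
  exists N : set Rn, leb_outer N = 0%E /\
    forall x, Om x -> ~ N x -> P x.

Definition ae_in2 (Om : set Rn) (P : Rn -> Rn -> Prop) : Prop :=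
  exists N : set Rn, leb_outer N = 0%E /\
    forall x y, Om x -> Om y -> ~ N x -> ~ N y -> P x y.

Definition emeasurable_on (Om : set Rn) (g : Rn -> \bar R) : Prop :=
  forall a : R, leb_measurable (Om `&` [set x | (g x < a%:E)%E]).

Definition measurable_on (Om : set Rn) (f : Rn -> R) : Prop :=
  emeasurable_on Om (fun x => (f x)%:E).

(** Lebesgue integral over Om of a nonnegative function (layer-cake form:
    int_Om g = int_0^oo |{x in Om : g x > t}| dt) *)
Definition leb_integral_nonneg (Om : set Rn) (g : Rn -> R) : \bar R :=
  (\int[lebesgue_measure]_(t in [set t : R | (0 < t)%R])
      leb_outer (Om `&` [set x | (t < g x)%R]))%E.

Definition L1_on (Om : set Rn) (h : Rn -> R) : Prop :=
  measurable_on Om h /\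
  (leb_integral_nonneg Om (fun x => `|h x|%R) < +oo)%E.

Definition Linfty_on (Om : set Rn) (h : Rn -> R) : Prop :=
  measurable_on Om h /\
  exists M : R, ae_in Om (fun x => `|h x| <= M).

Definition almost_increasing_on (a : R) (D : set R) (f : R -> \bar R) : Prop :=
  forall s t, D s -> D t -> s <= t -> (f s <= a%:E * f t)%E.

(** weak Phi-functions on Om; phi x t is only relevant for t >= 0 *)
Definition weak_Phi (Om : set Rn) (phi : Rn -> R -> \bar R) : Prop :=
  (forall x t, Om x -> 0 <= t -> (0 <= phi x t)%E) /\
  (forall f : Rn -> R, measurable_on Om f ->
      emeasurable_on Om (fun x => phi x `|f x|)) /\
  ae_in Om (fun x =>
     (forall s t, 0 <= s -> s <= t -> (phi x s <= phi x t)%E) /\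
     phi x 0 = 0%E /\
     (forall e : R, 0 < e -> exists d : R, 0 < d /\
         forall t, 0 < t -> t < d -> (phi x t <= e%:E)%E) /\
     (forall M : R, exists T : R, forall t, T <= t -> (M%:E <= phi x t)%E)) /\
  exists a : R, 1 <= a /\
    ae_in Om (fun x => almost_increasing_on a [set t | 0 < t]
                         (fun t => phi x t * (t^-1)%:E)%E).

Definition phi_inv (phi : Rn -> R -> \bar R) (x : Rn) (tau : R) : \bar R :=
  ereal_inf [set t%:E | t in [set t : R | 0 <= t /\ (tau%:E <= phi x t)%E]].

Definition cond_A0 (Om : set Rn) (phi : Rn -> R -> \bar R) : Prop :=
  exists beta : R, 0 < beta <= 1 /\
    ae_in Om (fun x => (beta%:E <= phi_inv phi x 1 <= (beta^-1)%:E)%E).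

(** tau in [1, 1/|B|] is written 1 <= tau and tau * |B| <= 1 *)
Definition cond_A1 (Om : set Rn) (phi : Rn -> R -> \bar R) : Prop :=
  exists beta : R, 0 < beta <= 1 /\
    forall B : set Rn, is_ball B ->
      ae_in2 (Om `&` B) (fun x y => forall tau : R,
        1 <= tau -> (tau%:E * leb_outer B <= 1%:E)%E ->
        (beta%:E * phi_inv phi x tau <= phi_inv phi y tau)%E).

Definition cond_A2 (Om : set Rn) (phi : Rn -> R -> \bar R) : Prop :=
  forall sigma : R, 0 < sigma ->
    exists (beta : R) (h : Rn -> R),
      0 < beta <= 1 /\ L1_on Om h /\ Linfty_on Om h /\
      (forall x, Om x -> 0 <= h x) /\
      ae_in2 Om (fun x y => forall tau : R, 0 <= tau -> tau <= sigma ->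
        (beta%:E * phi_inv phi x tau
           <= phi_inv phi y (tau + h x + h y))%E).

End GenOrlicz.

(* A bounded set is covered by finitely many Euclidean balls of radius 1/2,
   each of outer measure at most 1, so (A1) with tau = 1 applies on each of
   them: phi^-1(x,1) and phi^-1(y,1) are comparable for a.e. x, y in the same
   ball.  Since phi^-1(., 1) is a.e. positive and finite, fixing one point
   bounds it above and below on each ball, hence on Omega: this is (A0).
   For (A2) take h = 1/2, which is integrable because Omega is bounded.  The
   upper bound of (A0) and the almost increase of phi(x,t)/t give
   phi^-1(x,tau) <= M for tau <= sigma, while the lower bound gives
   phi^-1(y,tau + 1) >= phi^-1(y,1) >= b; so beta = b/M works. *)

From mathcomp Require Import all_boot all_order all_algebra.
From mathcomp Require Import all_classical all_reals all_analysis.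
From mathcomp Require Import lra.

Set Implicit Arguments.
Unset Strict Implicit.
Unset Printing Implicit Defensive.

Import Order.TTheory GRing.Theory Num.Theory numFieldNormedType.Exports.
Local Open Scope classical_set_scope.
Local Open Scope ring_scope.

Section OuterMeasure.
Variables (R : realType) (n : nat).
Notation Rn := 'rV[R]_n.

Lemma boxvol_ge0 (a b : Rn) : 0 <= boxvol a b.
Proof. by apply: prodr_ge0 => i _; rewrite le_max lexx orbT. Qed.

Lemma leb_outer_ge0 (A : set Rn) : (0 <= leb_outer A)%E.
Proof.
apply: le_ereal_inf_tmp => _ [a [b [_ ->]]].
by apply: nneseries_ge0 => k _ _; rewrite lee_fin boxvol_ge0.
Qed.

Lemma leb_outer_le_cover (A : set Rn) (a b : nat -> Rn) :
  A `<=` \bigcup_k box (a k) (b k) ->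
  (leb_outer A <= \sum_(k <oo) (boxvol (a k) (b k))%:E)%E.
Proof. by move=> Acov; apply: ereal_inf_lbound; exists a, b. Qed.

Lemma nneseries_interleave_le (f g : nat -> \bar R) :
  (forall k, 0 <= f k)%E -> (forall k, 0 <= g k)%E ->
  (\sum_(k <oo) (if odd k then g k./2 else f k./2)
    <= \sum_(k <oo) f k + \sum_(k <oo) g k)%E.
Proof.
move=> f0 g0; rewrite -nneseriesD //.
pose c k := if odd k then g k./2 else f k./2.
change (\sum_(k <oo) c k <= \sum_(k <oo) (f k + g k))%E.
have sum_double N : (\sum_(0 <= k < N.*2) c k = \sum_(0 <= k < N) (f k + g k))%E.
  elim: N => [|N IH]; first by rewrite !big_geq.
  rewrite doubleS (big_nat_recr N.*2.+1) // (big_nat_recr N.*2) // IH.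
  by rewrite (big_nat_recr N) //= /c /= odd_double /= doubleK uphalf_double addeA.
apply: lime_le; first by apply: is_cvg_nneseries => k _; rewrite /c; case: ifP.
near=> N.
apply: (@le_trans _ _ (\sum_(0 <= k < N.*2) c k)%E).
  rewrite (big_cat_nat _ (n := N) (m := 0) (p := N.*2)) //=.
    by rewrite leeDl // sume_ge0 // => k _; rewrite /c; case: ifP.
  by rewrite -addnn leq_addr.
by rewrite sum_double; apply: nneseries_lim_ge => k _ _; exact: adde_ge0.
Unshelve. all: by end_near.
Qed.

Lemma leb_outer_setU_null (A B : set Rn) :
  leb_outer A = 0%E -> leb_outer B = 0%E -> leb_outer (A `|` B) = 0%E.
Proof.
move=> A0 B0; apply/le_anti; rewrite leb_outer_ge0 andbT.
apply/lee_addgt0Pr => e e0; rewrite add0e.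
have e20 : 0 < e / 2 by rewrite divr_gt0.
have /ereal_inf_lt[_ [a1 [b1 [covA ->]]] sumA] : (leb_outer A < (e / 2)%:E)%E.
  by rewrite A0 lte_fin.
have /ereal_inf_lt[_ [a2 [b2 [covB ->]]] sumB] : (leb_outer B < (e / 2)%:E)%E.
  by rewrite B0 lte_fin.
pose a k := if odd k then a2 k./2 else a1 k./2.
pose b k := if odd k then b2 k./2 else b1 k./2.
apply: (le_trans (@leb_outer_le_cover _ a b _)).
  move=> x [/covA[k _ xk]|/covB[k _ xk]].
    by exists k.*2 => //; rewrite /a /b odd_double doubleK.
  by exists k.*2.+1 => //; rewrite /a /b /= odd_double /= uphalf_double.
have -> : (\sum_(k <oo) (boxvol (a k) (b k))%:E = \sum_(k <oo)
    if odd k then (boxvol (a2 k./2) (b2 k./2))%:E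
    else (boxvol (a1 k./2) (b1 k./2))%:E)%E.
  by apply: eq_eseriesr => k _; rewrite /a /b; case: ifP.
apply: le_trans (@nneseries_interleave_le (fun k => (boxvol (a1 k) (b1 k))%:E)
  (fun k => (boxvol (a2 k) (b2 k))%:E) _ _) _ => [k|k|].
- by rewrite lee_fin boxvol_ge0.
- by rewrite lee_fin boxvol_ge0.
by rewrite (le_trans (ltW (lteD sumA sumB))) // -EFinD -splitr.
Qed.

Hypothesis n_gt0 : (0 < n)%N.

Lemma boxvol_diag0 (a : Rn) : boxvol a a = 0.
Proof. by rewrite /boxvol (bigD1 (Ordinal n_gt0)) //= subrr maxxx mul0r. Qed.

Lemma leb_outer_le_box (A : set Rn) (a b : Rn) :
  A `<=` box a b -> (leb_outer A <= (boxvol a b)%:E)%E.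
Proof.
move=> Abox.
pose a' k := if k == 0%N then a else 0.
pose b' k := if k == 0%N then b else 0.
apply: (le_trans (@leb_outer_le_cover _ a' b' _)); first by move=> x /Abox; exists 0%N.
rewrite le_eqVlt; apply/orP; left; apply/eqP.
apply: lim_near_cst => //; near=> N.
rewrite big_ltn; last by near: N; exists 1%N.
rewrite big1_seq ?adde0 // => k /andP[_]; rewrite mem_index_iota => /andP[k1 _].
by rewrite /a' /b' gtn_eqF // boxvol_diag0.
Unshelve. all: by end_near.
Qed.

Lemma leb_outer_set0 : leb_outer (@set0 Rn) = 0%E.
Proof.
apply/le_anti; rewrite leb_outer_ge0 andbT.
by have := @leb_outer_le_box set0 0 0 (@sub0set _ _); rewrite boxvol_diag0.
Qed.

End OuterMeasure.

(* The empty product makes every box of R^0 have volume 1, so R^0 has no null sets. *)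
Lemma leb_outer_dim0_ge1 (R : realType) (A : set 'rV[R]_0) : (1 <= leb_outer A)%E.
Proof.
apply: le_ereal_inf_tmp => _ [a [b [_ ->]]].
apply: le_trans (@nneseries_lim_ge _ _ xpredT 0%N 1%N _).
  by rewrite big_nat1 /boxvol big_ord0.
by move=> k _ _; rewrite lee_fin boxvol_ge0.
Qed.

Section AlmostEverywhere.
Variables (R : realType) (n : nat).
Notation Rn := 'rV[R]_n.
Implicit Types (Om : set Rn) (P Q : Rn -> Prop).

Lemma ae_in_subset Om Om' P : Om' `<=` Om -> ae_in Om P -> ae_in Om' P.
Proof. by move=> sub [N [N0 HN]]; exists N; split => // x /sub; apply: HN. Qed.

Lemma ae_in_impl Om P Q :
  (forall x, Om x -> P x -> Q x) -> ae_in Om P -> ae_in Om Q.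
Proof.
by move=> PQ [N [N0 HN]]; exists N; split => // x Omx Nx; apply/PQ/HN.
Qed.

Lemma ae_in_and Om P Q :
  ae_in Om P -> ae_in Om Q -> ae_in Om (fun x => P x /\ Q x).
Proof.
move=> [N1 [N10 HN1]] [N2 [N20 HN2]]; exists (N1 `|` N2).
split; first exact: leb_outer_setU_null.
by move=> x Omx Nx; split; [apply: HN1 | apply: HN2] => // ?; apply: Nx; [left|right].
Qed.

End AlmostEverywhere.

Section Geometry.
Variables (R : realType) (n : nat).
Notation Rn := 'rV[R]_n.

Lemma sqnorm_ge0 (x : Rn) : 0 <= sqnorm x.
Proof. by apply: sumr_ge0 => i _; exact: sqr_ge0. Qed.

Lemma sqr_coord_le_sqnorm (x : Rn) i : x ord0 i ^+ 2 <= sqnorm x.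
Proof.
by rewrite /sqnorm (bigD1 i) //= lerDl; apply: sumr_ge0 => j _; exact: sqr_ge0.
Qed.

Lemma coord_le_sqnorm (M : R) (x : Rn) i :
  sqnorm x <= M -> - (M + 1) <= x ord0 i <= M + 1.
Proof.
move=> xM; have := le_trans (sqr_coord_le_sqnorm x i) xM.
by have := sqnorm_ge0 x => ? ?; apply/andP; split; nra.
Qed.

Lemma eball_sub_cube (c : Rn) (r : R) :
  0 < r -> eball c r `<=` box (c - const_mx r) (c + const_mx r).
Proof.
move=> r0 y yc i; have := le_lt_trans (sqr_coord_le_sqnorm (y - c) i) yc.
by rewrite !mxE => ?; apply/andP; split; nra.
Qed.

Lemma boxvol_cube (c : Rn) (r : R) :
  0 < r -> boxvol (c - const_mx r) (c + const_mx r) = (r *+ 2) ^+ n.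
Proof.
move=> r0; rewrite /boxvol (eq_bigr (fun _ => r *+ 2)) ?prodr_const ?card_ord //.
move=> i _; rewrite !mxE (_ : _ - _ = r *+ 2); last by rewrite mulr2n; lra.
by apply/max_idPl; rewrite mulr2n; lra.
Qed.

Lemma leb_outer_eball_half_le1 (c : Rn) :
  (0 < n)%N -> (leb_outer (eball c (1/2)) <= 1%:E)%E.
Proof.
move=> n_gt0; have half_gt0 : (0 : R) < 1/2 by lra.
apply: le_trans (@leb_outer_le_box R n n_gt0 _ _ _ (@eball_sub_cube c (1/2) half_gt0)) _.
by rewrite boxvol_cube // lee_fin (_ : (1/2) *+ 2 = 1) ?expr1n // mulr2n; lra.
Qed.

Lemma leb_outer_bounded_fin (Om : set Rn) :
  (0 < n)%N -> bounded_Rn Om -> leb_outer Om \is a fin_num.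
Proof.
move=> n_gt0 [M OmM].
have Om_box : Om `<=` box (const_mx (- (M + 2))) (const_mx (M + 2)).
  move=> x /OmM xM i; rewrite !mxE.
  by have /andP[? ?] := coord_le_sqnorm i xM; apply/andP; split; lra.
rewrite ge0_fin_numE ?leb_outer_ge0 //.
exact: le_lt_trans (leb_outer_le_box n_gt0 Om_box) (ltry _).
Qed.

(* [ball] on row vectors is the sup-norm ball; one of radius d := 1/(2(n+1))
   lies in the Euclidean ball of radius 1/2 since n d^2 < 1/4. *)
Lemma bounded_Rn_eball_cover (Om : set Rn) : bounded_Rn Om ->
  exists s : seq Rn, forall x, Om x -> exists2 c, c \in s & eball c (1/2) x.
Proof.
move=> [M OmM].
pose K := [set v : Rn | forall i, `[- (M + 1), M + 1]%classic (v ord0 i)].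
have K_compact : compact K.
  apply: (@rV_compact _ _ (fun=> `[- (M + 1), M + 1]%classic)) => _.
  exact: segment_compact.
have Om_K : Om `<=` K by move=> x /OmM xM i /=; rewrite in_itv /=; exact: coord_le_sqnorm.
pose d : R := (2 * (n%:R + 1))^-1.
have d_gt0 : 0 < d by rewrite invr_gt0 mulr_gt0 // ltr_wpDl.
have [D _ KD] : finite_subset_cover setT (fun c : Rn => ball c d) K.
  move: K_compact; rewrite compact_cover; apply.
  - by move=> c _; exact: ball_open.
  - by move=> x _; exists x => //; exact: ballxx.
exists (finmap.enum_fset D) => x /Om_K /KD[c /= cD xc]; exists c => //.
apply: (@le_lt_trans _ _ (\sum_(i < n) d ^+ 2)).
  apply: ler_sum => i _; rewrite !mxE.
  have [_ /(_ ord0 i)] := xc; rewrite /ball /= ltr_norml => /andP[? ?]; nra.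
rewrite big_const_ord iter_addr_0 -mulr_natl.
have dE : d * (2 * (n%:R + 1)) = 1 by rewrite mulVf // gt_eqF // mulr_gt0 // ltr_wpDl.
have : (0 : R) <= n%:R by [].
nra.
Qed.

End Geometry.

Section ConditionA0.
Variables (R : realType) (n : nat).
Notation Rn := 'rV[R]_n.
Implicit Types (Om A B : set Rn) (phi : Rn -> R -> \bar R).

Lemma phi_inv1_pos_fin Om phi : weak_Phi Om phi ->
  ae_in Om (fun x => exists2 u : R, 0 < u & phi_inv phi x 1 = u%:E).
Proof.
move=> [_ [_ [PhiOm _]]]; apply: ae_in_impl PhiOm => x _ [_ [phi0 [small large]]].
have [d [d_gt0 phi_small]] := small (1/2) (ltac:(lra) : (0 : R) < 1/2).
have [T phi_large] := large 1.
have inv_ge_d : (d%:E <= phi_inv phi x 1)%E.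
  apply: le_ereal_inf_tmp => _ [t [t_ge0 phi_t] <-]; rewrite lee_fin leNgt.
  apply/negP => td; move: t_ge0; rewrite le_eqVlt => /orP[/eqP t0|t_gt0].
    by move: phi_t; rewrite -t0 phi0 lee_fin; lra.
  by have := le_trans phi_t (phi_small t t_gt0 td); rewrite lee_fin; lra.
have inv_le_T : (phi_inv phi x 1 <= (Num.max T 0)%:E)%E.
  apply: ereal_inf_lbound; exists (Num.max T 0) => //.
  by split; [rewrite le_max lexx orbT | apply: phi_large; rewrite le_max lexx].
move: inv_ge_d inv_le_T; case: (phi_inv phi x 1) => [u| |] //=.
by rewrite lee_fin => du _; exists u => //; exact: lt_le_trans du.
Qed.

Lemma cond_A0_subset A B phi : A `<=` B -> cond_A0 B phi -> cond_A0 A phi.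
Proof. by move=> AB [b [b01 aeB]]; exists b; split => //; exact: ae_in_subset aeB. Qed.

Lemma cond_A0_setU A B phi :
  cond_A0 A phi -> cond_A0 B phi -> cond_A0 (A `|` B) phi.
Proof.
move=> [b1 [/andP[b1_gt0 b1_le1] [N1 [N10 HN1]]]].
move=> [b2 [/andP[b2_gt0 _] [N2 [N20 HN2]]]].
have b_gt0 : 0 < Num.min b1 b2 by rewrite lt_min b1_gt0.
exists (Num.min b1 b2); split; first by rewrite b_gt0 ge_min b1_le1.
exists (N1 `|` N2); split; first exact: leb_outer_setU_null.
have weaken b e : Num.min b1 b2 <= b -> (b%:E <= e <= (b^-1)%:E)%E ->
    ((Num.min b1 b2)%:E <= e <= ((Num.min b1 b2)^-1)%:E)%E.
  move=> minb /andP[be eb]; rewrite (le_trans _ be) ?lee_fin //=.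
  by rewrite (le_trans eb) // lee_fin lef_pV2 ?posrE // (lt_le_trans b_gt0 minb).
move=> x [Ax|Bx] Nx.
  by apply: (weaken b1); [rewrite ge_min lexx | apply: HN1 => // ?; apply: Nx; left].
by apply: (weaken b2); [rewrite ge_min lexx orbT | apply: HN2 => // ?; apply: Nx; right].
Qed.

(* If [beta phi^-1(x,1) <= phi^-1(y,1)] for a.e. [x, y] in [A], one fixed good
   point [y] bounds [phi^-1(x,1)] between [beta phi^-1(y,1)] and [phi^-1(y,1)/beta]. *)
Lemma cond_A0_of_comparable A phi (beta : R) : 0 < beta ->
  ae_in A (fun x => exists2 u : R, 0 < u & phi_inv phi x 1 = u%:E) ->
  ae_in2 A (fun x y => (beta%:E * phi_inv phi x 1 <= phi_inv phi y 1)%E) ->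
  cond_A0 A phi.
Proof.
move=> beta_gt0 [Ng [Ng0 HNg]] [N [N0 HN]].
have NNg0 := leb_outer_setU_null N0 Ng0.
have [[y [Ay Ny]]|noy] := pselect (exists y, A y /\ ~ (N `|` Ng) y); last first.
  exists 1; split; first by rewrite ltr01 lexx.
  by exists (N `|` Ng); split => // x Ax Nx; exfalso; apply: noy; exists x.
have [v v_gt0 yv] := HNg y Ay (fun h => Ny (or_intror h)).
pose b := Num.min 1 (Num.min (beta * v) (beta / v)).
have b_gt0 : 0 < b by rewrite !lt_min ltr01 mulr_gt0 // divr_gt0.
exists b; split; first by rewrite b_gt0 ge_min lexx.
exists (N `|` Ng); split => // x Ax Nx.
have [u u_gt0 xu] := HNg x Ax (fun h => Nx (or_intror h)).
have xy := HN x y Ax Ay (fun h => Nx (or_introl h)) (fun h => Ny (or_introl h)).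
have yx := HN y x Ay Ax (fun h => Ny (or_introl h)) (fun h => Nx (or_introl h)).
move: xy yx; rewrite xu yv -!EFinM !lee_fin => xy yx.
have b_le1 : b <= beta * v by rewrite /b !ge_min lexx !orbT.
have b_le2 : b <= beta / v by rewrite /b !ge_min lexx !orbT.
have u_le : u <= (beta / v)^-1 by rewrite invf_div ler_pdivlMr // mulrC.
rewrite (le_trans b_le1 yx) (le_trans u_le) //.
by rewrite lef_pV2 ?posrE ?divr_gt0.
Qed.

Lemma cond_A0_of_A1 Om phi : (0 < n)%N ->
  bounded_Rn Om -> weak_Phi Om phi -> cond_A1 Om phi -> cond_A0 Om phi.
Proof.
move=> n_gt0 Om_bd Om_Phi [beta [/andP[beta_gt0 _] A1]].
have [s Om_cov] := bounded_Rn_eball_cover Om_bd.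
have A0_ball c : cond_A0 (Om `&` eball c (1/2)) phi.
  apply: (cond_A0_of_comparable beta_gt0).
    exact: ae_in_subset (phi_inv1_pos_fin Om_Phi).
  have [|N [N0 HN]] := A1 (eball c (1/2)); first by exists c, (1/2); split => //; lra.
  exists N; split => // x y Ox Oy Nx Ny; apply: HN => //.
  by rewrite mul1e leb_outer_eball_half_le1.
suff A0_cover : cond_A0 (Om `&` [set x | exists2 c, c \in s & eball c (1/2) x]) phi.
  by apply: cond_A0_subset A0_cover => x Omx; split => //; exact: Om_cov.
elim: s {Om_cov} => [|c s IH].
  apply: (@cond_A0_subset _ set0) => [x [_ []] //|].
  exists 1; split; first by rewrite ltr01 lexx.
  by exists set0; split; [exact: leb_outer_set0 | move=> ? []].
apply: cond_A0_subset (cond_A0_setU (A0_ball c) IH) => x [Omx [c' + xc']].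
rewrite inE => /orP[/eqP c'c | c's]; first by left; rewrite -c'c.
by right; split => //; exists c'.
Qed.

End ConditionA0.

Lemma almost_increasing_ratio_lb (R : realType) (f : R -> \bar R) (a s t : R) :
  0 < a -> almost_increasing_on a [set t | 0 < t] (fun t => f t * (t^-1)%:E)%E ->
  0 < s -> s <= t -> (0 <= f t)%E -> (1 <= f s)%E ->
  ((t / (a * s))%:E <= f t)%E.
Proof.
move=> a_gt0 f_ai s_gt0 st ft_ge0 fs_ge1.
have t_gt0 : 0 < t := lt_le_trans s_gt0 st.
have := f_ai s t s_gt0 t_gt0 st.
case: (f t) ft_ge0 => [p| |] // _; last by rewrite leey.
case: (f s) fs_ge1 => [q| |] //; last first.
  by rewrite gt0_mulye ?lte_fin ?invr_gt0 // -!EFinM leye_eq.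
rewrite lee_fin -!EFinM lee_fin mulrA => q_ge1 ratio.
have : s^-1 * t <= a * p.
  by rewrite -ler_pdivlMr // (le_trans _ ratio) // ler_peMl // invr_ge0 ltW.
move/(ler_wpM2l (ltW s_gt0)); rewrite mulrA mulfV ?gt_eqF // mul1r => t_le.
by rewrite lee_fin ler_pdivrMr ?mulr_gt0 // (le_trans t_le) //; nra.
Qed.

Section ConditionA2.
Variables (R : realType) (n : nat).
Notation Rn := 'rV[R]_n.
Implicit Types (Om : set Rn) (phi : Rn -> R -> \bar R).

Lemma le_phi_inv phi x (tau1 tau2 : R) :
  tau1 <= tau2 -> (phi_inv phi x tau1 <= phi_inv phi x tau2)%E.
Proof.
move=> tau12; apply: ereal_inf_le_tmp => _ [t [t_ge0 phi_t] <-].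
by exists t => //; split => //; apply: le_trans phi_t; rewrite lee_fin.
Qed.

Lemma phi_inv_le phi x (tau t : R) :
  0 <= t -> (tau%:E <= phi x t)%E -> (phi_inv phi x tau <= t%:E)%E.
Proof. by move=> t_ge0 phi_t; apply: ereal_inf_lbound; exists t. Qed.

Lemma phi_inv_lt phi x (tau s : R) :
  (forall t, 0 <= t -> t <= s -> (phi x t <= phi x s)%E) ->
  (phi_inv phi x tau < s%:E)%E -> (tau%:E <= phi x s)%E.
Proof.
move=> phi_mono /ereal_inf_lt[_ [t [t_ge0 phi_t] <-]]; rewrite lte_fin => ts.
exact: le_trans phi_t (phi_mono _ t_ge0 (ltW ts)).
Qed.

(* With [s := 2/b > phi^-1(x,1)] we get [phi(x,s) >= 1], and the almost increase
   of [phi(x,t)/t] yields [phi(x,T) >= T/(a s) >= sigma] for [T := s (1 + a sigma)]. *)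
Lemma phi_inv_le_of_A0 phi x (a b sigma tau : R) :
  (forall t, 0 <= t -> (0 <= phi x t)%E) ->
  (forall s t, 0 <= s -> s <= t -> (phi x s <= phi x t)%E) ->
  almost_increasing_on a [set t | 0 < t] (fun t => phi x t * (t^-1)%:E)%E ->
  1 <= a -> 0 < b -> 0 <= sigma -> tau <= sigma ->
  (phi_inv phi x 1 <= (b^-1)%:E)%E ->
  (phi_inv phi x tau <= (2 / b * (1 + a * sigma))%:E)%E.
Proof.
move=> phi_ge0 phi_mono phi_ai a_ge1 b_gt0 sigma_ge0 tau_le x_le.
set s := 2 / b; set T := s * (1 + a * sigma).
have s_gt0 : 0 < s by rewrite divr_gt0.
have a_gt0 : 0 < a by lra.
have aS_gt0 : 0 < 1 + a * sigma by nra.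
have phi_s : (1%:E <= phi x s)%E.
  apply: phi_inv_lt => [t t0 ts|]; first exact: phi_mono.
  by apply: le_lt_trans x_le _; rewrite lte_fin /s mulrC ltr_pMr ?invr_gt0 //; lra.
have sT : s <= T by rewrite /T ler_peMr ?(ltW s_gt0) //; nra.
have T_gt0 : 0 < T := lt_le_trans s_gt0 sT.
apply: phi_inv_le; first exact: ltW.
apply: le_trans (almost_increasing_ratio_lb a_gt0 phi_ai s_gt0 sT
  (phi_ge0 _ (ltW T_gt0)) phi_s).
have as_gt0 : 0 < a * s by rewrite mulr_gt0.
by rewrite lee_fin ler_pdivlMr // /T; nra.
Qed.

Hypothesis n_gt0 : (0 < n)%N.

Lemma leb_measurable_set0 : leb_measurable (@set0 Rn).
Proof. by move=> E; rewrite setI0 setC0 setIT leb_outer_set0 // add0e. Qed.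

Lemma setI_cst_pred (A : set Rn) (b : bool) :
  A `&` [set _ | b] = if b then A else set0.
Proof. by case: b; [rewrite setIidl | apply/seteqP; split => x // []]. Qed.

Lemma measurable_on_cst Om (c : R) : leb_measurable Om -> measurable_on Om (fun=> c).
Proof.
by move=> Om_meas a; rewrite setI_cst_pred; case: ifP => // _; exact: leb_measurable_set0.
Qed.

Lemma leb_integral_nonneg_cst_lt_pinfty Om (c : R) :
  bounded_Rn Om -> (leb_integral_nonneg Om (fun=> c) < +oo)%E.
Proof.
move=> Om_bd; have Om_fin := leb_outer_bounded_fin n_gt0 Om_bd.
pose C := fine (leb_outer Om); pose E : set R := `]0, c[%classic.
have C_ge0 : 0 <= C by rewrite /C fine_ge0 // leb_outer_ge0.
rewrite /leb_integral_nonneg; have -> : [set t : R | 0 < t] = `]0, +oo[%classic.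
  by apply/seteqP; split => t; rewrite /= in_itv andbT.
rewrite (@eq_integral _ _ _ lebesgue_measure _ (fun t => (C * \1_E t)%:E)); last first.
  move=> t; rewrite inE /= in_itv /= andbT indicE => t_gt0.
  rewrite setI_cst_pred; case: ifPn => [tc|ct].
    by rewrite mem_set ?mulr1 ?fineK // /E /= in_itv /= t_gt0.
  by rewrite leb_outer_set0 // memNset ?mulr0 // /E /= in_itv /= t_gt0; exact/negP.
rewrite (@integralZl_indic _ _ _ lebesgue_measure _ (measurable_itv `]0, +oo[)
  (fun=> E) C); [|by move=> ?; exfalso; lra|exact: measurable_itv].
rewrite integral_indic //; last exact: measurable_itv.
rewrite setIidl; last by move=> t; rewrite /E /= !in_itv /= => /andP[-> _].
have := lebesgue_measure_itv `]0, c[; rewrite /=; case: ifP => _ ->.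
  by rewrite -EFinM ltry.
by rewrite mule0 ltry.
Qed.

Lemma L1_on_cst Om (c : R) :
  bounded_Rn Om -> leb_measurable Om -> L1_on Om (fun=> c).
Proof.
move=> Om_bd Om_meas; split; first exact: measurable_on_cst.
exact: leb_integral_nonneg_cst_lt_pinfty.
Qed.

Lemma Linfty_on_cst Om (c : R) : leb_measurable Om -> Linfty_on Om (fun=> c).
Proof.
move=> Om_meas; split; first exact: measurable_on_cst.
by exists `|c|, set0; split; [exact: leb_outer_set0 | move=> *].
Qed.

Lemma cond_A2_of_A0 Om phi : bounded_Rn Om -> leb_measurable Om ->
  weak_Phi Om phi -> cond_A0 Om phi -> cond_A2 Om phi.
Proof.
move=> Om_bd Om_meas [phi_ge0 [_ [PhiOm [a [a_ge1 ai]]]]] [b [/andP[b_gt0 _] A0]].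
move=> sigma sigma_gt0.
pose M := 2 / b * (1 + a * sigma).
have M_gt0 : 0 < M by rewrite /M mulr_gt0 ?divr_gt0 //; nra.
have beta_gt0 : 0 < Num.min 1 (b / M) by rewrite lt_min ltr01 divr_gt0.
exists (Num.min 1 (b / M)), (fun=> 1/2).
split; first by rewrite beta_gt0 ge_min lexx.
split; first exact: L1_on_cst.
split; first exact: Linfty_on_cst.
split; first by move=> *; lra.
have [N [N0 HN]] := ae_in_and A0 (ae_in_and PhiOm ai).
exists N; split => // x y Omx Omy Nx Ny tau tau_ge0 tau_le.
have [/andP[_ x_le] [[x_mono _] x_ai]] := HN x Omx Nx.
have [/andP[y_ge _] _] := HN y Omy Ny.
have x_inv := phi_inv_le_of_A0 (phi_ge0 x ^~ Omx) x_mono x_ai a_ge1 b_gt0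
  (ltW sigma_gt0) tau_le x_le.
apply: le_trans (lee_wpmul2l _ x_inv) _; first by rewrite lee_fin ltW.
rewrite -EFinM (le_trans _ (le_trans y_ge (le_phi_inv _ _ _))) //; last by lra.
by rewrite lee_fin -ler_pdivlMr // ge_min lexx orbT.
Qed.

End ConditionA2.

Theorem proposition3p2 (R : realType) (n : nat) (Om : set 'rV[R]_n)
    (phi : 'rV[R]_n -> R -> \bar R) :
  bounded_Rn Om -> leb_measurable Om ->
  weak_Phi Om phi -> cond_A1 Om phi ->
  cond_A0 Om phi /\ cond_A2 Om phi.
Proof.
case: n Om phi => [|n] Om phi Om_bd Om_meas Om_Phi A1.
  have [_ [_ [[N [N0 _]] _]]] := Om_Phi.
  by have := leb_outer_dim0_ge1 N; rewrite N0 lee_fin ler10.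
have A0 := cond_A0_of_A1 (ltn0Sn n) Om_bd Om_Phi A1.
by split; last exact: cond_A2_of_A0.
Qed.
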